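(* Let $1\le q<p\le\infty$ with $q<2$, and let $A=(a_{ij})$ be a real $m\times n$ matrix. Then $$\|(A\circ A)^T\colon\ell^m_{q^*/2}\to\ell^n_{p^*/2}\|^{1/2}\ge c(p,q)\max_{j\le n}\sqrt{\ln(j+1)}\,b_j^{\downarrow},$$ where $b_j=\|(a_{ij})_{i\le m}\|_{2q/(2-q)}$ and $c(p,q)>0$ depends only on $p,q$.
   Context: $A\circ A=(a_{ij}^2)$, $p^*$ Hölder conjugate of $p$. $\ell_s^n$ is $\mathbb{R}^n$ with $\|x\|_s=(\sum|x_j|^s)^{1/s}$ ($\max$ for $s=\infty$; quasi-norm for $s<1$), $\|B\colon\ell_s^n\to\ell_t^m\|=\sup_{\|x\|_s\le1}\|Bx\|_t$. $(b_j^{\downarrow})$ is the non-increasing rearrangement of $(|b_j|)$. *)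

From HB Require Import structures.
From mathcomp Require Import all_boot all_order all_algebra.
From mathcomp Require Import all_classical all_reals all_analysis.
From mathcomp Require Import Rstruct Rstruct_topology.
From Stdlib Require Import Rdefinitions.
Set Implicit Arguments. Unset Strict Implicit. Unset Printing Implicit Defensive.
Import Order.TTheory GRing.Theory Num.Theory.
Local Open Scope ring_scope.

Definition hconj (p : \bar R) : \bar R :=
  match p with
  | EFin r => if r == 1 then +oo%E else (r / (r - 1))%:E
  | +oo%E => 1%:E
  | -oo%E => -oo%E
  end.

Definition half_exp (s : \bar R) : \bar R :=
  match s with
  | EFin r => (r / 2)%:E
  | e => e
  end.

Definition lnorm (s : \bar R) (n : nat) (x : 'I_n -> R) : R :=
  match s with
  | EFin r => powR (\sum_(j < n) powR `|x j| r) (r^-1)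
  | +oo%E => \big[Order.max/0]_(j < n) `|x j|
  | -oo%E => 0
  end.

Definition opnorm (s t : \bar R) (m n : nat) (B : 'M[R]_(m, n)) : R :=
  sup [set lnorm t (fun i : 'I_m => \sum_(j < n) B i j * x j) |
        x in [set x : 'I_n -> R | lnorm s x <= 1]].

Definition hsq (m n : nat) (A : 'M[R]_(m, n)) : 'M[R]_(m, n) :=
  \matrix_(i, j) (A i j ^+ 2).

(* non-increasing rearrangement of (|b_j|), 0-indexed: decr b k = b^down_{k+1} *)
Definition decr (n : nat) (b : 'I_n -> R) (k : nat) : R :=
  nth 0 (sort (fun x y : R => y <= x) [seq `|b j| | j <- enum 'I_n]) k.

From HB Require Import structures.
From mathcomp Require Import all_boot all_order all_algebra.
From mathcomp Require Import all_classical all_reals all_analysis.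
From mathcomp Require Import Rstruct Rstruct_topology.
From Stdlib Require Import Rdefinitions.
From mathcomp Require Import ring lra.
Import Order.TTheory GRing.Theory Num.Theory.
Local Open Scope ring_scope.

(* Write r := q*/2 and e := 2q/(2-q), so that 1/r = 2 - 2/q (with 1/oo = 0,
   i.e. [fine r^-1]) and 2 + e/r = e.  Fix k, let v := b^down_(k+1) and let S
   be the set of columns j with b_j >= v, so that |S| > k.  The test vector
   x_i := (|S|^-1 sum_(j in S) |a_ij|^e / b_j^e)^(1/r) has ||x||_r = 1, and
   because a_ij^2 |a_ij|^(e/r) = |a_ij|^e, every j in S satisfies
   ((A o A)^T x)_j >= |S|^(-1/r) b_j^2 >= |S|^(-1/r) v^2.  Taking the
   l_(p*/2)-norm over S bounds the operator norm below by |S|^a v^2 with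
   a := 2/q - 2/p in (0, 2], and |S|^a >= (k+1)^a >= (a/4)^2 ln(k+2). *)

Lemma lnorm_ge0 (s : \bar R) n (x : 'I_n -> R) : 0 <= lnorm s x.
Proof.
by case: s => [r| |]; rewrite /lnorm; [exact: powR_ge0 | exact: bigmax_ge_id |].
Qed.

Lemma lnorm_powR (r : R) n (x : 'I_n -> R) : 0 < r ->
  powR (lnorm r%:E x) r = \sum_(j < n) powR `|x j| r.
Proof.
move=> r0; rewrite /lnorm -powRrM mulVf ?gt_eqF // powRr1 //.
by rewrite sumr_ge0 // => j _; exact: powR_ge0.
Qed.

Lemma ler_lnorm (s : \bar R) n (y z : 'I_n -> R) : (0 < s)%E ->
  (forall j, `|y j| <= `|z j|) -> lnorm s y <= lnorm s z.
Proof.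
case: s => [r| |] s0 yz; rewrite /lnorm; last 2 first.
- by apply: le_bigmax2 => j _.
- by rewrite ltNge leNye in s0.
rewrite lte_fin in s0; apply: ge0_ler_powR; first by rewrite invr_ge0 ltW.
- by rewrite nnegrE sumr_ge0 // => j _; exact: powR_ge0.
- by rewrite nnegrE sumr_ge0 // => j _; exact: powR_ge0.
apply: ler_sum => j _.
by apply: ge0_ler_powR; rewrite ?nnegrE ?normr_ge0 // ltW.
Qed.

Lemma lnorm_ge_card (s : \bar R) n (y : 'I_n -> R) (S : {set 'I_n}) (v : R) :
  (0 < s)%E -> (0 < #|S|)%nat -> 0 <= v -> (forall j, j \in S -> v <= `|y j|) ->
  powR #|S|%:R (fine s^-1) * v <= lnorm s y.
Proof.
case: s => [r| |] s0 /card_gt0P[j0 j0S] v0 yS; rewrite /lnorm; last 2 first.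
- by rewrite invey powRr0 mul1r (le_trans (yS _ j0S)) ?le_bigmax.
- by rewrite ltNge leNye in s0.
rewrite lte_fin in s0; rewrite inver gt_eqF //.
have -> : powR #|S|%:R r^-1 * v = powR (#|S|%:R * powR v r) r^-1.
  by rewrite powRM ?powR_ge0 // -powRrM mulfV ?gt_eqF // powRr1.
apply: ge0_ler_powR; first by rewrite invr_ge0 ltW.
- by rewrite nnegrE mulr_ge0 ?powR_ge0.
- by rewrite nnegrE sumr_ge0 // => j _; exact: powR_ge0.
rewrite (bigID (mem S)) /= -[X in X <= _]addr0 lerD //; last first.
  by rewrite sumr_ge0 // => j _; exact: powR_ge0.
rewrite -sum1_card natr_sum mulr_suml; apply: ler_sum => j jS.
by rewrite mul1r; apply: ge0_ler_powR; rewrite ?nnegrE ?normr_ge0 ?yS // ltW.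
Qed.

Lemma lnorm_ge_norm (s : \bar R) n (x : 'I_n -> R) (i : 'I_n) :
  (0 < s)%E -> `|x i| <= lnorm s x.
Proof.
move=> s0; have := @lnorm_ge_card s n x [set i] `|x i| s0.
by rewrite cards1 powR1 mul1r; apply=> // j; rewrite inE => /eqP ->.
Qed.

Lemma lnorm_root_le1 (s : \bar R) m (u : 'I_m -> R) : (0 < s)%E ->
  (forall i, 0 <= u i) -> \sum_(i < m) u i <= 1 ->
  lnorm s (fun i => powR (u i) (fine s^-1)) <= 1.
Proof.
case: s => [r| |] s0 u0 u1; rewrite /lnorm; last 2 first.
- by rewrite invey; apply: bigmax_le => // i _; rewrite powRr0 normr1.
- by rewrite ltNge leNye in s0.
rewrite lte_fin in s0; rewrite inver gt_eqF //.
have -> : \sum_(i < m) powR `|powR (u i) r^-1| r = \sum_(i < m) u i.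
  apply: eq_bigr => i _.
  by rewrite ger0_norm ?powR_ge0 // -powRrM mulVf ?gt_eqF // powRr1.
apply: (@le_trans _ _ (powR 1 r^-1)); last by rewrite powR1.
apply: ge0_ler_powR; first by rewrite invr_ge0 ltW.
- by rewrite nnegrE sumr_ge0.
- by rewrite nnegrE.
- exact: u1.
Qed.

Lemma lnorm_le_opnorm {s t : \bar R} {m n} (B : 'M[R]_(m, n)) (x : 'I_n -> R) :
  (0 < s)%E -> (0 < t)%E -> lnorm s x <= 1 ->
  lnorm t (fun i => \sum_(j < n) B i j * x j) <= opnorm s t B.
Proof.
move=> s0 t0 x1; apply: ub_le_sup; last by exists x.
exists (lnorm t (fun i => \sum_(j < n) `|B i j|)) => _ [y y1 <-].
apply: ler_lnorm => // i; rewrite [X in _ <= X]ger0_norm ?sumr_ge0 //.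
apply: le_trans (ler_norm_sum _ _ _) _; apply: ler_sum => j _.
by rewrite normrM ler_piMr // (le_trans (lnorm_ge_norm s n y j s0)).
Qed.

Lemma decr_card_ge {n} (b : 'I_n -> R) (k : nat) : (k < n)%nat ->
  leq k.+1 #|[set j | decr b k <= `|b j|]|.
Proof.
move=> kn; rewrite /decr; set s := sort _ _; set v := nth 0 s k.
have s_perm : perm_eq s [seq `|b j| | j <- enum 'I_n] by exact/permEl/perm_sort.
have s_size : size s = n by rewrite (perm_size s_perm) size_map size_enum_ord.
have s_sorted : sorted (fun x y : R => y <= x) s.
  by apply: sort_sorted => x y; exact: le_total.
have -> : #|[set j | v <= `|b j|]| = count (>= v) s.
  rewrite (permP s_perm) count_map cardsE cardE enumT /enum_mem size_filter.
  by apply: eq_count => j; rewrite !inE.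
rewrite -(cat_take_drop k.+1 s) count_cat.
have /eqP -> : count (>= v) (take k.+1 s) == size (take k.+1 s).
  rewrite -all_count; apply/allP => y /(nthP 0)[i].
  rewrite size_takel ?s_size // => ik <-.
  rewrite nth_take //; apply: (sorted_leq_nth (leT := fun x y : R => y <= x)).
  - by move=> x1 y1 z1 /= h1 h2; exact: le_trans h2 h1.
  - by move=> x /=.
  - exact: s_sorted.
  - by rewrite inE s_size (leq_trans ik).
  - by rewrite inE s_size.
  - by rewrite -ltnS.
by rewrite size_takel ?s_size // leq_addr.
Qed.

Lemma half_hconj_gt0 {p : \bar R} : (1%:E <= p)%E -> (0 < half_exp (hconj p))%E.
Proof.
case: p => [r| |] p1; rewrite /hconj /half_exp; last 2 first.
- by rewrite lte_fin divr_gt0.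
- by rewrite leeNy_eq in p1.
rewrite lee_fin in p1; case: eqP => [_|/eqP r1]; first exact: ltry.
rewrite lte_fin !divr_gt0 ?(lt_le_trans ltr01 p1) // subr_gt0.
by rewrite lt_neqAle eq_sym r1 p1.
Qed.

Lemma fine_inv_half_hconj (p : \bar R) : (1%:E <= p)%E ->
  fine (half_exp (hconj p))^-1 = 2 - 2 * fine p^-1.
Proof.
case: p => [r| |] p1; rewrite /hconj /half_exp; last 2 first.
- by rewrite inver gt_eqF ?divr_gt0 // (@invey R) /= mulr0 subr0 invf_div divr1.
- by rewrite leeNy_eq in p1.
rewrite lee_fin in p1; have r0 : 0 < r := lt_le_trans ltr01 p1.
have [->|r1] := eqVneq r 1.
  by rewrite (@invey R) (@inve1 R) mulr1 subrr.
have r1_gt0 : 0 < r - 1 by rewrite subr_gt0 lt_neqAle eq_sym r1 p1.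
rewrite !inver !gt_eqF ?divr_gt0 //=.
by field; rewrite !gt_eqF.
Qed.

Lemma half_hconj_inv_gap {p q : \bar R} : (1%:E <= q)%E -> (q < p)%E ->
  0 < fine (half_exp (hconj p))^-1 - fine (half_exp (hconj q))^-1 <= 2.
Proof.
move=> q1 qp; rewrite !fine_inv_half_hconj ?(le_trans q1 (ltW qp)) //.
case: q q1 qp => [q| |] q1 qp; last 2 first.
- by rewrite ltNge leey in qp.
- by rewrite leeNy_eq in q1.
rewrite lee_fin in q1; have q0 : 0 < q := lt_le_trans ltr01 q1.
rewrite inver gt_eqF //=.
have /andP[fq0 fq1] : 0 < q^-1 <= 1 by rewrite invr_gt0 q0 invf_le1.
have /andP[fp0 fpq] : 0 <= fine p^-1 < q^-1.
  case: p qp => [p| |] qp; last 2 first.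
  - by rewrite (@invey R) /= lexx invr_gt0.
  - by rewrite ltNge leNye in qp.
  rewrite lte_fin in qp; have p0 : 0 < p := lt_trans q0 qp.
  by rewrite inver gt_eqF //= invr_ge0 ltW //= ltf_pV2.
apply/andP; split; lra.
Qed.

Section HadamardSquareTestVector.
Context {m n : nat} (A : 'M[R]_(m, n)) {s : \bar R} {e beta : R} {S : {set 'I_n}}.
Hypotheses (s_gt0 : (0 < s)%E) (e_gt0 : 0 < e) (e_conj : 2 + e * fine s^-1 = e).
Hypotheses (S_gt0 : (0 < #|S|)%nat) (beta_gt0 : 0 < beta).
Hypothesis beta_le_col : forall j, j \in S -> beta <= lnorm e%:E (fun i => A i j).

Let g := fine s^-1.
Let N : R := #|S|%:R.
Let col j := lnorm e%:E (fun i => A i j).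
Let weight i j := powR `|A i j| e / powR (col j) e.
Let test_vector i := powR (N^-1 * \sum_(j in S) weight i j) g.

Let N_gt0 : 0 < N. Proof. by rewrite ltr0n. Qed.

Let g_ge0 : 0 <= g. Proof. by rewrite fine_ge0 // inve_ge0 ltW. Qed.

Let eg : e * g = e - 2. Proof. by rewrite -[in RHS]e_conj addrC addKr. Qed.

Let col_gt0 j : j \in S -> 0 < col j.
Proof. by move=> jS; rewrite (lt_le_trans beta_gt0) ?beta_le_col. Qed.

Let weight_ge0 i j : 0 <= weight i j. Proof. by rewrite divr_ge0 ?powR_ge0. Qed.

Let sum_weight j : j \in S -> \sum_(i < m) weight i j = 1.
Proof.
move=> jS; rewrite -mulr_suml -lnorm_powR // mulfV // gt_eqF //.
by rewrite powR_gt0 ?col_gt0.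
Qed.

Let weight_le_test_vector i j : j \in S ->
  powR (N^-1 * weight i j) g <= test_vector i.
Proof.
move=> jS; have N_inv_ge0 : 0 <= N^-1 by rewrite invr_ge0 ltW.
apply: ge0_ler_powR => //.
- exact: mulr_ge0.
- by apply: mulr_ge0 => //; rewrite sumr_ge0.
by rewrite ler_wpM2l // (bigD1 j) //= lerDl sumr_ge0.
Qed.

Let powR_weight i j : j \in S -> powR (N^-1 * weight i j) g
  = powR N (- g) * (powR (col j) (2 - e) * powR `|A i j| (e - 2)).
Proof.
move=> /col_gt0; rewrite /weight; move: (col j) (normr_ge0 (A i j)) => c a0 c0.
move: `|_| a0 => a a0.
rewrite powRM ?invr_ge0 ?divr_ge0 ?powR_ge0 ?(ltW N_gt0) //.
rewrite powRM ?invr_ge0 ?powR_ge0 // -(powR_inv1 (ltW N_gt0)).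
rewrite -(powR_inv1 (powR_ge0 c e)) -!powRrM mulN1r eg; congr (_ * _).
by rewrite mulrC mulrN eg opprB.
Qed.

Lemma test_vector_le1 : lnorm s test_vector <= 1.
Proof.
apply: lnorm_root_le1 => // [i|].
  by rewrite mulr_ge0 ?invr_ge0 ?sumr_ge0 // ltW.
rewrite -mulr_sumr exchange_big /= (eq_bigr (fun=> 1)); last exact: sum_weight.
by rewrite sumr_const mulVf ?gt_eqF.
Qed.

Lemma hsq_test_vector_ge j : j \in S ->
  powR N (- g) * col j ^+ 2 <= \sum_(i < m) (hsq A)^T j i * test_vector i.
Proof.
move=> jS; have c_gt0 := col_gt0 j jS.
have term i : powR N (- g) * (powR (col j) (2 - e) * powR `|A i j| e)
    <= (hsq A)^T j i * test_vector i.
  rewrite !mxE -(real_normK (num_real (A i j))) -powR_mulrn //.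
  apply: le_trans (ler_wpM2l (powR_ge0 _ _) (weight_le_test_vector i j jS)).
  rewrite powR_weight // [X in _ <= X]mulrCA [X in _ <= _ * X]mulrCA.
  by rewrite -powRD subrKC // gt_eqF.
apply: le_trans (ler_sum _ (fun i _ => term i)).
rewrite -mulr_sumr -mulr_sumr -lnorm_powR // -/(col j) -powRD; last first.
  by rewrite (gt_eqF c_gt0) implybT.
by rewrite subrK powR_mulrn // ltW.
Qed.

Lemma opnorm_hsq_ge (t : \bar R) : (0 < t)%E ->
  powR N (fine t^-1 - g) * beta ^+ 2 <= opnorm s t (hsq A)^T.
Proof.
move=> t_gt0.
apply: le_trans (lnorm_le_opnorm (hsq A)^T test_vector s_gt0 t_gt0 test_vector_le1).
rewrite powRD ?(gt_eqF N_gt0) ?implybT // -mulrA.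
apply: lnorm_ge_card => // [|j jS]; first by rewrite mulr_ge0 ?powR_ge0 ?sqr_ge0.
rewrite ger0_norm; last first.
  by apply: sumr_ge0 => i _; rewrite !mxE; exact: mulr_ge0 (sqr_ge0 _) (powR_ge0 _ _).
apply: le_trans (hsq_test_vector_ge j jS); rewrite ler_wpM2l ?powR_ge0 //.
by rewrite lerXn2r ?nnegrE ?beta_le_col // ltW ?col_gt0.
Qed.

End HadamardSquareTestVector.

Lemma ln_succ_le_powR (a : R) (k : nat) : 0 < a -> a <= 2 ->
  (a / 4) ^+ 2 * ln k.+2%:R <= powR k.+1%:R a.
Proof.
move=> a0 a2; set y : R := k.+2%:R.
have y0 : 0 < y by rewrite ltr0n.
have ln_y : 0 <= ln y by rewrite ln_ge0 // ler1n.
have P0 : 0 <= powR k.+1%:R a by exact: powR_ge0.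
have ln_lt : a * ln y < powR y a.
  by rewrite -ln_powR; apply: ln_sublinear; exact: powR_gt0.
have y_le : powR y a <= 4 * powR k.+1%:R a.
  apply: (@le_trans _ _ (powR (2 * k.+1%:R) a)).
    apply: ge0_ler_powR; rewrite ?nnegrE ?(ltW a0) ?(ltW y0) ?mulr_ge0 ?ler0n //.
    by rewrite /y -natrM ler_nat mul2n -addnn addSn !ltnS leq_addl.
  rewrite powRM ?ler0n // ler_wpM2r //.
  apply: (@le_trans _ _ (powR 2 2)); first by apply: ler_powR => //; rewrite ler1n.
  by rewrite powR_mulrn ?ler0n // expr2; lra.
nra.
Qed.

Lemma sqrt_opnorm_hsq_ge_decr (s t : \bar R) (e : R) m n (A : 'M[R]_(m, n))
    (k : 'I_n) :
  (0 < s)%E -> (0 < t)%E -> 0 < e -> 2 + e * fine s^-1 = e ->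
  0 < fine t^-1 - fine s^-1 <= 2 ->
  (fine t^-1 - fine s^-1) / 4 *
    (Num.sqrt (ln k.+2%:R) * decr (fun j => lnorm e%:E (fun i => A i j)) k)
  <= Num.sqrt (opnorm s t (hsq A)^T).
Proof.
move=> s0 t0 e0 e_conj /andP[a0 a2]; set a := _ - _ in a0 a2 *.
set b := fun j => _; set v := decr b k.
have c0 : 0 < a / 4 by rewrite divr_gt0.
have [v0|v_gt0] := leP v 0.
  rewrite (le_trans _ (sqrtr_ge0 _)) // pmulr_rle0 //.
  by rewrite mulr_ge0_le0 ?sqrtr_ge0.
pose S := [set j | v <= `|b j|].
have S_card : leq k.+1 #|S| := decr_card_ge b k (ltn_ord k).
have v_le_col j : j \in S -> v <= lnorm e%:E (fun i => A i j).
  by rewrite inE => /le_trans; apply; rewrite ger0_norm ?lnorm_ge0.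
have card_ge : powR k.+1%:R a <= powR #|S|%:R a.
  by apply: ge0_ler_powR; rewrite ?nnegrE ?ler0n ?ler_nat // ltW.
have key : (a / 4 * (Num.sqrt (ln k.+2%:R) * v)) ^+ 2 <= opnorm s t (hsq A)^T.
  rewrite mulrA exprMn exprMn sqr_sqrtr ?ln_ge0 ?ler1n //.
  apply: le_trans (opnorm_hsq_ge A s0 e0 e_conj _ v_gt0 v_le_col t t0); last first.
    exact: leq_trans (ltn0Sn k) S_card.
  by rewrite ler_wpM2r ?sqr_ge0 // (le_trans _ card_ge) ?ln_succ_le_powR.
have lhs_ge0 : 0 <= a / 4 * (Num.sqrt (ln k.+2%:R) * v).
  by rewrite !mulr_ge0 ?sqrtr_ge0 // ltW.
by rewrite -(ger0_norm lhs_ge0) -sqrtr_sqr ler_wsqrtr.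
Qed.

Theorem proposition5p4 (p q : \bar R) :
  (1%:E <= q)%E -> (q < p)%E -> (q < 2%:E)%E ->
  exists c : R, 0 < c /\
    forall (m n : nat) (A : 'M[R]_(m, n)),
      let b := fun j : 'I_n =>
        lnorm ((2%:R * fine q / (2%:R - fine q))%:E) (fun i : 'I_m => A i j) in
      Num.sqrt (opnorm (half_exp (hconj q)) (half_exp (hconj p)) (hsq A)^T)
      >= c * \big[Order.max/0]_(k < n) (Num.sqrt (ln (k.+2)%:R) * decr b k).
Proof.
case: q => [q| |] q1 qp q2; last 2 first.
- by rewrite ltNge leey in qp.
- by rewrite leeNy_eq in q1.
have s_gt0 := half_hconj_gt0 q1.
have t_gt0 := half_hconj_gt0 (le_trans q1 (ltW qp)).
have gap := half_hconj_inv_gap q1 qp.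
have /andP[a_gt0 _] := gap; set a := _ - _ in gap a_gt0.
exists (a / 4); split; first by rewrite divr_gt0.
rewrite lee_fin in q1; rewrite lte_fin in q2.
have q_gt0 : 0 < q := lt_le_trans ltr01 q1.
pose e := 2 * q / (2 - q).
have e_gt0 : 0 < e by rewrite !divr_gt0 ?mulr_gt0 // subr_gt0.
have e_conj : 2 + e * fine (half_exp (hconj q%:E))^-1 = e.
  rewrite /e fine_inv_half_hconj ?lee_fin // inver gt_eqF //=.
  by field; rewrite subr_eq0 !gt_eqF.
move=> m n A; cbv zeta; rewrite -ler_pdivlMl ?divr_gt0 //.
apply: bigmax_le => [|k _].
  by rewrite mulr_ge0 ?sqrtr_ge0 // invr_ge0 divr_ge0 // ltW.
by rewrite ler_pdivlMl ?divr_gt0 // sqrt_opnorm_hsq_ge_decr.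
Qed.
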